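(* For $k\ge1$ let $\mu_{2k+5}$ be the permutation of $[2k+5]$ given as the sequence $$\mu_{2k+5}=2k+2,\ 2k+5,\ 2k+4,\ \underbrace{2k,\ 2k+3,\ 2k-2,\ 2k+1,\ \dots,\ 6,\ 9,\ 4,\ 7}_{\text{pairs }(2j,\,2j+3)\text{ for } j=k,k-1,\dots,2},\ 1,\ 5,\ 3,\ 2,$$ so that $\mu_7=4,7,6,1,5,3,2$, $\mu_9=6,9,8,4,7,1,5,3,2$, $\mu_{11}=8,11,10,6,9,4,7,1,5,3,2$. Let $U=\{\mu_7,\mu_9,\mu_{11},\dots\}$. Then $U$ is an antichain with respect to $\prec$. Moreover, $\{123,3214,2143,15432\}\cup U$ is an antichain with respect to $\prec$.
   Context: $\pi\prec\rho$ means $\rho$ (as a sequence) has a subsequence order-isomorphic to $\pi$ (same relative order of entries). Permutations like $3214$ are written in one-line notation. An antichain is a set of pairwise $\prec$-incomparable permutations. *)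

From mathcomp Require Import all_boot.
Set Implicit Arguments. Unset Strict Implicit. Unset Printing Implicit Defensive.

Definition order_iso (s t : seq nat) : Prop :=
  size s = size t /\
  forall i j, i < size s -> j < size s ->
    (nth 0 s i < nth 0 s j) = (nth 0 t i < nth 0 t j).

Definition contains (pi rho : seq nat) : Prop :=
  exists m : bitseq, size m = size rho /\ order_iso pi (mask m rho).

Definition antichain (A : seq nat -> Prop) : Prop :=
  forall p q, A p -> A q -> p <> q -> ~ contains p q.

Definition mu (k : nat) : seq nat :=
  [:: 2*k+2; 2*k+5; 2*k+4] ++
  flatten [seq [:: 2*j; 2*j+3] | j <- rev (iota 2 (k.-1))] ++
  [:: 1; 5; 3; 2].

Definition U (s : seq nat) : Prop := exists k, 1 <= k /\ s = mu k.

Definition extU (s : seq nat) : Prop :=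
  s \in [:: [:: 1;2;3]; [:: 3;2;1;4]; [:: 2;1;4;3]; [:: 1;5;4;3;2]] \/ U s.

Example mu_check1 : mu 1 = [:: 4;7;6;1;5;3;2]. Proof. by []. Qed.
Example mu_check2 : mu 2 = [:: 6;9;8;4;7;1;5;3;2]. Proof. by []. Qed.
Example mu_check3 : mu 3 = [:: 8;11;10;6;9;4;7;1;5;3;2]. Proof. by []. Qed.

From mathcomp Require Import all_boot zify.

(* A permutation is read as the graph on its positions whose edges are the
   non-inversions (i < j and s_i < s_j); an occurrence of a pattern is then an
   increasing map of positions that preserves edges.  The graph of mu_{2k+5} is
   a path, the spine 0 - 4 - 3 - 6 - 5 - ... - 2k+2 - 2k+1, with two leaves at
   each end (1 and 2 at the hub 0, 2k+3 and 2k+4 at the hub 2k+1).  So only the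
   two hubs have three neighbours, no vertex has four, there is no cycle, and
   the hubs have no neighbour to their left.  An occurrence of mu_{2k+5} in
   mu_{2l+5} sends hubs to hubs and the spine injectively along the spine, so
   the spine of length 2k covers the spine of length 2l, i.e. k = l.  The
   patterns 123 (a triangle), 2143 (a 4-cycle), 15432 (four neighbours) and
   3214 (three neighbours, all to the left) therefore do not occur in any mu,
   mu is too long to occur in them, and the four small patterns are compared by
   computation. *)

Set Implicit Arguments.
Unset Strict Implicit.
Unset Printing Implicit Defensive.

Definition noninv (s : seq nat) (i j : nat) : bool :=
  (i < j < size s) && (nth 0 s i < nth 0 s j) ||
  (j < i < size s) && (nth 0 s j < nth 0 s i).

Lemma noninvC s i j : noninv s i j = noninv s j i.
Proof. by rewrite /noninv orbC. Qed.

Lemma noninv_sym s i j : noninv s i j -> noninv s j i.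
Proof. by rewrite noninvC. Qed.

Definition noninv_embedding (p q : seq nat) (g : nat -> nat) : Prop :=
  (forall i j, i < j < size p -> g i < g j) /\
  (forall a b, noninv p a b -> noninv q (g a) (g b)).

Lemma contains_embedding p q : contains p q -> exists g, noninv_embedding p q g.
Proof.
case=> m [size_m [size_pm ord_pm]].
pose idx := mask m (iota 0 (size q)).
have mask_q : mask m q = map (nth 0 q) idx.
  by rewrite map_mask -/(mkseq _ _) mkseq_nth.
have size_idx : size idx = size p by rewrite size_pm mask_q size_map.
have idx_lt i : i < size p -> nth 0 idx i < size q.
  move=> lt_i; have : nth 0 idx i \in iota 0 (size q).
    by apply: mem_mask (mem_nth _ _); rewrite size_idx.
  by rewrite mem_iota.
have idx_sorted : sorted ltn idx := sorted_mask ltn_trans m (iota_ltn_sorted 0 _).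
have idx_mono i j : i < j < size p -> nth 0 idx i < nth 0 idx j.
  case/andP=> lt_ij lt_j; apply: (sorted_ltn_nth ltn_trans 0 idx_sorted) => //.
    by rewrite inE size_idx (ltn_trans lt_ij).
  by rewrite inE size_idx.
have ord_q i j : i < size p -> j < size p ->
    (nth 0 p i < nth 0 p j) = (nth 0 q (nth 0 idx i) < nth 0 q (nth 0 idx j)).
  by move=> lt_i lt_j; rewrite ord_pm // mask_q !(nth_map 0) ?size_idx.
exists (nth 0 idx); split=> // a b /orP[] /andP[/andP[lt_ab lt_b] lt_v];
  apply/orP; [left | right];
  by rewrite -ord_q ?(ltn_trans lt_ab) // lt_v idx_mono ?lt_ab ?idx_lt.
Qed.

Lemma contains_size p q : contains p q -> size p <= size q.
Proof. by case=> m [size_m [-> _]]; rewrite size_mask // -size_m count_size. Qed.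

Lemma unit_walk_span (f : nat -> nat) n :
  (forall s t, s <= n -> t <= n -> f s = f t -> s = t) ->
  (forall s, s < n -> f s.+1 = f s + 1 \/ f s = f s.+1 + 1) ->
  f n = f 0 + n \/ f 0 = f n + n.
Proof.
move=> f_inj f_step.
suff /(_ n (leqnn n)) [up|down] :
    forall s, s <= n -> (forall t, t <= s -> f t = f 0 + t) \/ (forall t, t <= s -> f 0 = f t + t).
- by left; apply: up.
- by right; apply: down.
elim=> [|s IH] lt_sn; first by left=> t; rewrite leqn0 => /eqP->; rewrite addn0.
have step := f_step s lt_sn.
have no_back : s = 0 \/ f s.+1 <> f (s - 1).
  case: (posnP s) => [|s_gt0]; [left|right=> /f_inj]; lia.
have extend (P : nat -> Prop) :
    P s.+1 -> (forall t, t <= s -> P t) -> forall t, t <= s.+1 -> P t.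
  by move=> Ps1 Ps t; rewrite leq_eqVlt ltnS => /predU1P[->|/Ps].
have at0 (P : nat -> Prop) : P 0 -> s = 0 -> forall t, t <= s -> P t.
  by move=> P0 -> t; rewrite leqn0 => /eqP->.
have [up|down] := IH (ltnW lt_sn).
- have := up s (leqnn s); have := up (s - 1) (leq_subr 1 s).
  case: step => step Es1 Es.
    by left; apply: extend up; lia.
  by right; apply: extend; [lia | apply: at0; lia].
- have := down s (leqnn s); have := down (s - 1) (leq_subr 1 s).
  case: step => step Es1 Es.
    by left; apply: extend; [lia | apply: at0; lia].
  by right; apply: extend down; lia.
Qed.

Lemma mu_succ l : 0 < l ->
  mu l.+1 = [:: 2*l+4; 2*l+7; 2*l+6; 2*l+2; 2*l+5] ++ drop 3 (mu l).
Proof.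
case: l => // l _; rewrite /mu -[l.+2.-1]addn1 iotaD rev_cat /= drop0.
by congr [:: _, _, _, _, _ & _]; lia.
Qed.

Lemma size_mu l : 0 < l -> size (mu l) = 2*l+5.
Proof.
elim: l => // -[|l] IH _ //.
by rewrite mu_succ // size_cat size_drop IH //=; lia.
Qed.

Definition mu_at l i :=
  if i == 0 then 2*l+2 else if i == 1 then 2*l+5 else if i == 2 then 2*l+4
  else if i <= 2*l then 2*l + 7 - i - 4 * odd i
  else if i == 2*l+1 then 1 else if i == 2*l+2 then 5 else if i == 2*l+3 then 3
  else 2.

Lemma mu_at_shift l i : 4 < i -> mu_at l.+1 i = mu_at l (i - 2).
Proof. by move=> i_gt4; rewrite /mu_at; repeat case: ifP; lia. Qed.

Lemma nth_mu l i : 0 < l -> i < 2*l+5 -> nth 0 (mu l) i = mu_at l i.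
Proof.
elim: l i => // -[_ i _ lt_i7|l IH i _ lt_i].
  by case: i lt_i7 => [|[|[|[|[|[|[|i]]]]]]].
have [lt_i5|le5i] := ltnP i 5.
  rewrite mu_succ //; case: i {lt_i} lt_i5 => [|[|[|[|[|i]]]]] // _ /=;
  by rewrite /mu_at /=; repeat case: ifP; lia.
rewrite mu_at_shift // -IH //; last lia.
by rewrite mu_succ // nth_cat (leq_gtF le5i) nth_drop; congr nth => /=; lia.
Qed.

Definition on_spine l x := x = 0 \/ 3 <= x <= 2*l+2.

(* The index of [x] along the path 0 - 4 - 3 - 6 - 5 - ...; [spine_rank 0 = 0]
   because of truncated subtraction. *)
Definition spine_rank x := x + 2 * odd x - 3.

Definition spine_at s := if s == 0 then 0 else s + 1 + 2 * odd s.

Lemma spine_atK : cancel spine_at spine_rank.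
Proof. by move=> s; rewrite /spine_at /spine_rank; case: ifP; lia. Qed.

Lemma spine_at_on_spine l s : s <= 2*l -> on_spine l (spine_at s).
Proof. by rewrite /spine_at /on_spine; case: ifP; lia. Qed.

Lemma spine_at_last l : 0 < l -> spine_at (2*l) = 2*l+1.
Proof. by rewrite /spine_at; case: ifP; lia. Qed.

Lemma spine_rank_inj l x y :
  on_spine l x -> on_spine l y -> spine_rank x = spine_rank y -> x = y.
Proof. rewrite /on_spine /spine_rank; lia. Qed.

Lemma spine_rank_last l : spine_rank (2*l+1) = 2*l.
Proof. rewrite /spine_rank; lia. Qed.

Lemma spine_rank_pred_last l : spine_rank (2*l+2) = 2*l-1.
Proof. rewrite /spine_rank; lia. Qed.

Lemma spine_rank_le l x : on_spine l x -> spine_rank x <= 2*l.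
Proof. rewrite /on_spine /spine_rank; lia. Qed.

Definition hub_leaf l a b : Prop :=
  a = 0 /\ (b = 1 \/ b = 2) \/ a = 2*l+1 /\ (b = 2*l+3 \/ b = 2*l+4).

Definition spine_adj l a b : Prop :=
  on_spine l a /\ on_spine l b /\
  (spine_rank a = spine_rank b + 1 \/ spine_rank b = spine_rank a + 1).

Definition mu_edge l a b := hub_leaf l a b \/ hub_leaf l b a \/ spine_adj l a b.

Lemma mu_edge_sym l a b : mu_edge l a b <-> mu_edge l b a.
Proof. by rewrite /mu_edge /spine_adj; split=> [[|[|[? []]]]|[|[|[? []]]]]; tauto. Qed.

(* [mu_at] in a form [lia] can use, together with the spine rank of each position. *)
Definition mu_entry l i v : Prop :=
  i = 0 /\ v = 2*l+2 /\ spine_rank i = 0 \/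
  i = 1 /\ v = 2*l+5 \/ i = 2 /\ v = 2*l+4 \/
  (exists t, i = 2*t+3 /\ i < 2*l+1 /\ v = 2*l-2*t /\ spine_rank i = 2*t+2) \/
  (exists t, i = 2*t+4 /\ i <= 2*l /\ v = 2*l+3-2*t /\ spine_rank i = 2*t+1) \/
  i = 2*l+1 /\ v = 1 /\ spine_rank i = 2*l \/
  i = 2*l+2 /\ v = 5 /\ spine_rank i = 2*l-1 \/
  i = 2*l+3 /\ v = 3 \/ i = 2*l+4 /\ v = 2.

Section MuGraph.

Variable l : nat.
Hypothesis l_gt0 : 0 < l.

Lemma mu_at_entry i : i < 2*l+5 -> mu_entry l i (mu_at l i).
Proof.
rewrite /mu_entry /mu_at /spine_rank => lt_i.
case: ifP => [/eqP->|ne0]; first by left.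
case: ifP => [/eqP->|ne1]; first by do 1 right; left.
case: ifP => [/eqP->|ne2]; first by do 2 right; left.
case: ifP => [le_il|gt_il].
  case: (boolP (odd i)) => odd_i.
    by do 3 right; left; exists (i./2 - 1); lia.
  by do 4 right; left; exists (i./2 - 2); lia.
case: ifP => [/eqP->|ne2l1]; first by do 5 right; left; lia.
case: ifP => [/eqP->|ne2l2]; first by do 6 right; left; lia.
case: ifP => [/eqP->|ne2l3]; first by do 7 right; left; lia.
by do 8 right; lia.
Qed.

Lemma mu_at_lt a b : a < b < 2*l+5 -> mu_at l a < mu_at l b <-> mu_edge l a b.
Proof.
move=> /andP[lt_ab lt_b].
have := mu_at_entry lt_b; have := mu_at_entry (ltn_trans lt_ab lt_b).
rewrite /mu_entry /mu_edge /hub_leaf /spine_adj /on_spine.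
move: (mu_at l a) (mu_at l b) => u v.
(* Choosing the true disjunct of [mu_edge] before calling lia keeps these 81 cases fast. *)
case=> [?|[?|[?|[[? ?]|[[? ?]|[?|[?|[?|?]]]]]]]];
  case=> [?|[?|[?|[[? ?]|[[? ?]|[?|[?|[?|?]]]]]]]];
  (split=> ?; [do ?[by left; lia | right]; lia | lia]).
Qed.

Lemma noninv_mu a b : noninv (mu l) a b <-> mu_edge l a b.
Proof.
wlog lt_ab : a b / a < b => [wlog_ab|].
  case: (ltngtP a b) => [/wlog_ab //|/wlog_ab|<-]; first by rewrite noninvC mu_edge_sym.
  by rewrite /noninv !ltnn /mu_edge /hub_leaf /spine_adj /on_spine; split=> //; lia.
rewrite /noninv size_mu // lt_ab (leq_gtF (ltnW lt_ab)) orbF.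
have [lt_b|le_b] := ltnP b (2*l+5).
  by rewrite !andTb !nth_mu ?(ltn_trans lt_ab) // mu_at_lt // lt_ab.
by rewrite andbF andFb /mu_edge /hub_leaf /spine_adj /on_spine; split=> //; lia.
Qed.

Lemma mu_nbr0 b : noninv (mu l) 0 b <-> b = 1 \/ b = 2 \/ b = 4.
Proof.
have r0 : spine_rank 0 = 0 by [].
have r4 : spine_rank 4 = 1 by [].
have sp4 : on_spine l 4 by rewrite /on_spine; lia.
rewrite noninv_mu /mu_edge /hub_leaf /spine_adj; split.
  case=> [|[|[_ [b_sp rb]]]]; try lia.
  by do 2 right; apply: spine_rank_inj b_sp sp4 _; lia.
case=> [->|[->|->]]; [left; left; lia | left; left; lia | do 2 right].
by split; [left | split; [|lia]].
Qed.

Lemma mu_nbr_hub b : noninv (mu l) (2*l+1) b <-> b = 2*l+2 \/ b = 2*l+3 \/ b = 2*l+4.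
Proof.
have r1 := spine_rank_last l; have r2 := spine_rank_pred_last l.
have sp1 : on_spine l (2*l+1) by rewrite /on_spine; lia.
have sp2 : on_spine l (2*l+2) by rewrite /on_spine; lia.
rewrite noninv_mu /mu_edge /hub_leaf /spine_adj; split.
  case=> [|[|[_ [b_sp rb]]]]; try lia.
  have := spine_rank_le b_sp; have := spine_rank_inj b_sp sp2; lia.
case=> [->|[->|->]]; [do 2 right | left; right; lia | left; right; lia].
by split; [|split; [|lia]].
Qed.

Lemma mu_spine_edge a b : on_spine l a -> on_spine l b -> noninv (mu l) a b ->
  spine_rank a = spine_rank b + 1 \/ spine_rank b = spine_rank a + 1.
Proof.
by move=> + + /noninv_mu; rewrite /mu_edge /hub_leaf /spine_adj /on_spine; lia.
Qed.

Lemma mu_inner_nbr a b : on_spine l a -> a <> 0 -> a <> 2*l+1 -> noninv (mu l) a b ->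
  on_spine l b /\ (spine_rank a = spine_rank b + 1 \/ spine_rank b = spine_rank a + 1).
Proof.
by move=> + + + /noninv_mu; rewrite /mu_edge /hub_leaf /spine_adj /on_spine; lia.
Qed.

Lemma mu_two_nbrs_on_spine a b c :
  noninv (mu l) a b -> noninv (mu l) a c -> b <> c -> on_spine l a.
Proof.
by move=> /noninv_mu + /noninv_mu; rewrite /mu_edge /hub_leaf /spine_adj /on_spine; lia.
Qed.

Lemma mu_three_nbrs_hub a b c d :
  noninv (mu l) a b -> noninv (mu l) a c -> noninv (mu l) a d ->
  b <> c -> b <> d -> c <> d -> a = 0 \/ a = 2*l+1.
Proof.
move=> ab ac ad bc bd cd; have a_sp := mu_two_nbrs_on_spine ab ac bc.
case: (eqVneq a 0) => [|/eqP a0]; first by left.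
case: (eqVneq a (2*l+1)) => [|/eqP a1]; first by right.
have [b_sp rb] := mu_inner_nbr a_sp a0 a1 ab.
have [c_sp rc] := mu_inner_nbr a_sp a0 a1 ac.
have [d_sp rd] := mu_inner_nbr a_sp a0 a1 ad.
have := spine_rank_inj b_sp c_sp; have := spine_rank_inj b_sp d_sp.
have := spine_rank_inj c_sp d_sp; lia.
Qed.

Lemma mu_spine_path s : s < 2*l -> noninv (mu l) (spine_at s) (spine_at s.+1).
Proof.
move=> lt_s; apply/noninv_mu; right; right; rewrite /spine_adj !spine_atK.
by split; [|split]; [apply: spine_at_on_spine; lia..|lia].
Qed.

Lemma mu_spine_two_nbrs s : s <= 2*l ->
  exists b c, [/\ b <> c, noninv (mu l) (spine_at s) b & noninv (mu l) (spine_at s) c].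
Proof.
move=> le_s; have [->|s_gt0] := posnP s.
  by exists 1, 2; split=> //; apply/mu_nbr0; lia.
have [lt_s|eq_s] := ltnP s (2*l); last first.
  have -> : s = 2*l by lia.
  rewrite spine_at_last //.
  by exists (2*l+3), (2*l+4); split; [lia | apply/mu_nbr_hub; lia ..].
exists (spine_at s.-1), (spine_at s.+1); split.
- by move/(congr1 spine_rank); rewrite !spine_atK; lia.
- by rewrite noninvC -{2}(prednK s_gt0) mu_spine_path // prednK //; lia.
- exact: mu_spine_path.
Qed.

Lemma mu_no_triangle a b c :
  noninv (mu l) a b -> noninv (mu l) b c -> noninv (mu l) a c ->
  a <> b -> b <> c -> a <> c -> False.
Proof.
move=> ab bc ac neq_ab neq_bc neq_ac.
have a_sp := mu_two_nbrs_on_spine ab ac neq_bc.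
have b_sp := mu_two_nbrs_on_spine (noninv_sym ab) bc neq_ac.
have c_sp := mu_two_nbrs_on_spine (noninv_sym ac) (noninv_sym bc) neq_ab.
have := mu_spine_edge a_sp b_sp ab; have := mu_spine_edge b_sp c_sp bc.
have := mu_spine_edge a_sp c_sp ac; lia.
Qed.

Lemma mu_no_square a b c d :
  noninv (mu l) a b -> noninv (mu l) b c -> noninv (mu l) c d -> noninv (mu l) d a ->
  a <> c -> b <> d -> False.
Proof.
move=> ab bc cd da neq_ac neq_bd.
have a_sp := mu_two_nbrs_on_spine ab (noninv_sym da) neq_bd.
have b_sp := mu_two_nbrs_on_spine (noninv_sym ab) bc neq_ac.
have c_sp := mu_two_nbrs_on_spine (noninv_sym bc) cd neq_bd.
have d_sp := mu_two_nbrs_on_spine (noninv_sym cd) da (not_eq_sym neq_ac).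
have := mu_spine_edge a_sp b_sp ab; have := mu_spine_edge b_sp c_sp bc.
have := mu_spine_edge c_sp d_sp cd; have := mu_spine_edge d_sp a_sp da.
have := spine_rank_inj a_sp c_sp; have := spine_rank_inj b_sp d_sp; lia.
Qed.

Lemma mu_three_nbrs_lt a b c d :
  noninv (mu l) a b -> noninv (mu l) a c -> noninv (mu l) a d ->
  b <> c -> b <> d -> c <> d -> a < b.
Proof.
move=> ab ac ad bc bd cd.
case: (mu_three_nbrs_hub ab ac ad bc bd cd) => a_hub; rewrite a_hub in ab *.
  by have := (mu_nbr0 b).1 ab; lia.
by have := (mu_nbr_hub b).1 ab; lia.
Qed.

Lemma mu_no_four_nbrs a b c d e :
  noninv (mu l) a b -> noninv (mu l) a c -> noninv (mu l) a d -> noninv (mu l) a e ->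
  b <> c -> b <> d -> b <> e -> c <> d -> c <> e -> d <> e -> False.
Proof.
move=> ab ac ad ae bc bd be cd ce de.
case: (mu_three_nbrs_hub ab ac ad bc bd cd) => a_hub; rewrite a_hub in ab ac ad ae.
  by move: ab ac ad ae; rewrite !mu_nbr0; lia.
by move: ab ac ad ae; rewrite !mu_nbr_hub; lia.
Qed.

End MuGraph.

Section MuEmbedding.

Variables (k l : nat) (g : nat -> nat).
Hypotheses (k_gt0 : 0 < k) (l_gt0 : 0 < l) (g_emb : noninv_embedding (mu k) (mu l) g).

Let g_edge : forall a b, noninv (mu k) a b -> noninv (mu l) (g a) (g b) := proj2 g_emb.

Lemma mu_emb_inj i j : i < 2*k+5 -> j < 2*k+5 -> g i = g j -> i = j.
Proof.
have g_lt x y : x < y -> y < 2*k+5 -> g x < g y.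
  by case: g_emb => g_mono _ lt_xy lt_y; apply: g_mono; rewrite lt_xy size_mu.
by have := g_lt i j; have := g_lt j i; lia.
Qed.

Lemma mu_emb_hub x : x = 0 \/ x = 2*k+1 -> g x = 0 \/ g x = 2*l+1.
Proof.
case=> ->.
  apply: (mu_three_nbrs_hub l_gt0 (@g_edge 0 1 _) (@g_edge 0 2 _) (@g_edge 0 4 _));
    by [apply/(mu_nbr0 k_gt0); lia | move/mu_emb_inj; lia].
apply: (mu_three_nbrs_hub l_gt0
  (@g_edge _ (2*k+2) _) (@g_edge _ (2*k+3) _) (@g_edge _ (2*k+4) _));
  by [apply/(mu_nbr_hub k_gt0); lia | move/mu_emb_inj; lia].
Qed.

Lemma mu_emb_on_spine s : s <= 2*k -> on_spine l (g (spine_at s)).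
Proof.
have nbr_lt a b : noninv (mu k) a b -> b < 2*k+5.
  by rewrite /noninv size_mu //; case/orP=> /andP[/andP[]]; lia.
move=> le_s; have [b [c [neq_bc sb sc]]] := mu_spine_two_nbrs k_gt0 le_s.
apply: (mu_two_nbrs_on_spine l_gt0 (g_edge sb) (g_edge sc)).
by move/mu_emb_inj; have := nbr_lt _ _ sb; have := nbr_lt _ _ sc; lia.
Qed.

Lemma mu_emb_rank_span (f := fun s => spine_rank (g (spine_at s))) :
  f (2*k) = f 0 + 2*k \/ f 0 = f (2*k) + 2*k.
Proof.
apply: unit_walk_span => [s t le_s le_t|s lt_s].
  move/(spine_rank_inj (mu_emb_on_spine le_s) (mu_emb_on_spine le_t)).
  have at_lt u : u <= 2*k -> spine_at u < 2*k+5.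
    by move/(spine_at_on_spine (l:=k)); rewrite /on_spine; lia.
  move/mu_emb_inj => /(_ (at_lt s le_s) (at_lt t le_t)) /(congr1 spine_rank).
  by rewrite !spine_atK.
have := g_edge (mu_spine_path k_gt0 lt_s).
move/(mu_spine_edge l_gt0 (mu_emb_on_spine (ltnW lt_s)) (mu_emb_on_spine lt_s)).
by rewrite /f; lia.
Qed.

End MuEmbedding.

Lemma mu_contains_mu k l : 0 < k -> 0 < l -> contains (mu k) (mu l) -> k = l.
Proof.
move=> k_gt0 l_gt0 /contains_embedding[g g_emb].
have := mu_emb_rank_span k_gt0 l_gt0 g_emb; rewrite /= spine_at_last //.
have g0_neq : g 0 <> g (2*k+1) by move/(mu_emb_inj k_gt0 l_gt0 g_emb); lia.
case: (mu_emb_hub k_gt0 l_gt0 g_emb (or_introl erefl)) => ->;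
  case: (mu_emb_hub k_gt0 l_gt0 g_emb (or_intror erefl)) => ->; rewrite /spine_rank; lia.
Qed.

Section SmallPatterns.

Variable l : nat.
Hypothesis l_gt0 : 0 < l.

Lemma mu_avoids_123 : ~ contains [:: 1; 2; 3] (mu l).
Proof.
move=> /contains_embedding[g [g_mono g_edge]].
have := g_mono 0 1 isT; have := g_mono 1 2 isT => lt12 lt01.
by apply: (mu_no_triangle l_gt0 (g_edge 0 1 isT) (g_edge 1 2 isT) (g_edge 0 2 isT)); lia.
Qed.

Lemma mu_avoids_3214 : ~ contains [:: 3; 2; 1; 4] (mu l).
Proof.
move=> /contains_embedding[g [g_mono g_edge]].
have := g_mono 0 1 isT; have := g_mono 1 2 isT; have := g_mono 2 3 isT.
have := mu_three_nbrs_lt l_gt0 (g_edge 3 0 isT) (g_edge 3 1 isT) (g_edge 3 2 isT).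
lia.
Qed.

Lemma mu_avoids_2143 : ~ contains [:: 2; 1; 4; 3] (mu l).
Proof.
move=> /contains_embedding[g [g_mono g_edge]].
have := g_mono 0 1 isT; have := g_mono 2 3 isT => lt23 lt01.
apply: (mu_no_square l_gt0 (g_edge 0 2 isT) (g_edge 2 1 isT) (g_edge 1 3 isT) (g_edge 3 0 isT));
  lia.
Qed.

Lemma mu_avoids_15432 : ~ contains [:: 1; 5; 4; 3; 2] (mu l).
Proof.
move=> /contains_embedding[g [g_mono g_edge]].
have := g_mono 1 2 isT; have := g_mono 2 3 isT; have := g_mono 3 4 isT => lt34 lt23 lt12.
apply: (mu_no_four_nbrs l_gt0
  (g_edge 0 1 isT) (g_edge 0 2 isT) (g_edge 0 3 isT) (g_edge 0 4 isT)); lia.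
Qed.

End SmallPatterns.

Fixpoint bitseqs n : seq bitseq :=
  if n is n'.+1 then [seq b :: m | b <- [:: true; false], m <- bitseqs n'] else [:: [::]].

Lemma mem_bitseqs m : m \in bitseqs (size m).
Proof. by elim: m => // b m IH; apply: (allpairs_f cons) => //; case: b. Qed.

Definition order_isob (s t : seq nat) : bool :=
  (size s == size t) &&
  all (fun i => all (fun j => (nth 0 s i < nth 0 s j) == (nth 0 t i < nth 0 t j))
                    (iota 0 (size s))) (iota 0 (size s)).

Lemma order_iso_isob s t : order_iso s t -> order_isob s t.
Proof.
case=> size_st ord_st; rewrite /order_isob size_st eqxx /=.
apply/allP=> i; rewrite mem_iota => lt_i.
by apply/allP=> j; rewrite mem_iota => lt_j; rewrite ord_st ?size_st.
Qed.

Definition containsb (p q : seq nat) : bool :=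
  has (fun m => order_isob p (mask m q)) (bitseqs (size q)).

Lemma contains_containsb p q : contains p q -> containsb p q.
Proof.
case=> m [size_m iso_m]; apply/hasP; exists m; last exact: order_iso_isob.
by rewrite -size_m mem_bitseqs.
Qed.

Lemma antichain_U : antichain U.
Proof.
move=> _ _ [k [k_gt0 ->]] [l [l_gt0 ->]] neq /(mu_contains_mu k_gt0 l_gt0) eq_kl.
by apply: neq; rewrite eq_kl.
Qed.

Theorem mainTheorem9 : antichain U /\ antichain extU.
Proof.
split; first exact: antichain_U.
move=> p q [p_small|[k [k_gt0 ->]]] [q_small|[l [l_gt0 ->]]] neq.
- move: p_small q_small neq; rewrite !inE.
  by move=> /or4P[]/eqP-> /or4P[]/eqP-> // _ /contains_containsb.
- by move: p_small; rewrite !inE => /or4P[]/eqP->;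
    [exact: mu_avoids_123 | exact: mu_avoids_3214 | exact: mu_avoids_2143 | exact: mu_avoids_15432].
- move/contains_size; rewrite size_mu //.
  by move: q_small; rewrite !inE => /or4P[]/eqP-> /=; lia.
- by apply: antichain_U neq; [exists k | exists l].
Qed.
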